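(* In the setting described in the context, if the operator $-i\,\Sigma^*\circ\Upsilon$ on $K^\partial\oplus K^\partial$ is positive definite, then $P+\varepsilon$ is an isomorphism $\mathcal D(P)\to H_0\oplus H_0$.
   Context: Inner products are linear in the first argument and conjugate-linear in the second. $H_0$ is a separable Hilbert space, $T$ a closed densely defined symmetric operator in $H_0$ with adjoint $T^*$; $H_1\subset H_0$ a dense subspace which is a Hilbert space with bounded inclusion, $H_1\subset\mathcal D(T^* )$. $K^\partial$ is a separable Hilbert space with inner product $\langle\cdot,\cdot\rangle_\partial$, $K\subset K^\partial$ a dense Hilbert subspace, and $\gamma:H_1\to K\oplus K$ a bounded surjective operator with $\mathcal D(T)=\operatorname{Ker}\gamma$. $\Sigma$ is a bounded invertible self-adjoint operator on $K^\partial\oplus K^\partial$ leaving $K\oplus K$ invariant, and $\langle T^*u,v\rangle-\langle u,T^*v\rangle=\langle i\Sigma\gamma u,\gamma v\rangle_\partial$ for all $u,v\in H_1$. $\Upsilon$ is a unitary operator on $K^\partial\oplus K^\partial$ leaving $K\oplus K$ invariant and commuting with $\Sigma$. Let $S=T\oplus(-T)$ in $H_0\oplus H_0$ (domain $\operatorname{Ker}\gamma\oplus\operatorname{Ker}\gamma$), so $S^*=T^*\oplus(-T^* )$. Let $P$ be the restriction of $S^*$ to $\{(a,b)\in H_1\oplus H_1:\gamma b=\Upsilon\gamma a\}$, i.e. $P(a,b)=(T^*a,-T^*b)$ on this domain; assume $P$ is a self-adjoint Fredholm operator in $H_0\oplus H_0$. Let $\varepsilon=\begin{pmatrix}0&1\\1&0\end{pmatrix}$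 on $H_0\oplus H_0$, i.e. $\varepsilon(a,b)=(b,a)$. *)

From mathcomp Require Import all_boot all_order all_algebra.
From mathcomp.real_closed Require Import complex.
From mathcomp Require Import reals.
Set Implicit Arguments. Unset Strict Implicit. Unset Printing Implicit Defensive.
Import Order.TTheory GRing.Theory Num.Theory.
Local Open Scope ring_scope.

Section Hilbert.
Variable R : realType.
Notation C := (R[i]).

Section OneSpace.
Variable V : lmodType C.
Variable ip : V -> V -> C.  (* linear in 1st argument, conjugate-linear in 2nd *)

Definition hnorm (x : V) : C := sqrtC (ip x x).

Definition hcvg (u : nat -> V) (x : V) : Prop :=
  forall e : C, 0 < e -> exists N, forall n, (N <= n)%N -> hnorm (u n - x) < e.

Definition hcauchy (u : nat -> V) : Prop :=
  forall e : C, 0 < e -> exists N, forall m n, (N <= m)%N -> (N <= n)%N ->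
    hnorm (u m - u n) < e.

Definition is_hilbert : Prop :=
  [/\ forall (a : C) (x y z : V), ip (a *: x + y) z = a * ip x z + ip y z,
      forall x y : V, ip y x = (ip x y)^*,
      forall x : V, 0 <= ip x x,
      forall x : V, ip x x = 0 -> x = 0
    & forall u : nat -> V, hcauchy u -> exists x, hcvg u x].

Definition separable : Prop :=
  exists d : nat -> V, forall x e, 0 < e -> exists n, hnorm (x - d n) < e.

Definition dense (D : V -> Prop) : Prop :=
  forall x e, 0 < e -> exists y, D y /\ hnorm (x - y) < e.

Definition subspace (D : V -> Prop) : Prop :=
  D 0 /\ forall (a : C) x y, D x -> D y -> D (a *: x + y).

Definition lin_on (D : V -> Prop) (A : V -> V) : Prop :=
  subspace D /\ forall (a : C) x y, D x -> D y -> A (a *: x + y) = a *: A x + A y.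

Definition is_adjoint (D : V -> Prop) (A : V -> V) (Ds : V -> Prop) (As : V -> V) :=
  forall v w, (Ds v /\ As v = w) <-> (forall u, D u -> ip (A u) v = ip u w).

Definition closed_op (D : V -> Prop) (A : V -> V) : Prop :=
  forall (u : nat -> V) x y, (forall n, D (u n)) -> hcvg u x ->
    hcvg (fun n => A (u n)) y -> D x /\ A x = y.

Definition symmetric_op (D : V -> Prop) (A : V -> V) : Prop :=
  forall u v, D u -> D v -> ip (A u) v = ip u (A v).

Definition selfadjoint_op (D : V -> Prop) (A : V -> V) : Prop :=
  dense D /\ lin_on D A /\ is_adjoint D A D A.

Definition in_span (s : seq V) (x : V) : Prop :=
  exists c : nat -> C, x = \sum_(i < size s) c i *: s`_i.

(* (possibly unbounded) Fredholm operator: closed, finite-dimensional kernel,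
   closed range of finite codimension *)
Definition fredholm_op (D : V -> Prop) (A : V -> V) : Prop :=
  [/\ lin_on D A, closed_op D A,
      exists s : seq V, forall x, D x -> A x = 0 -> in_span s x,
      forall (u : nat -> V) y, (forall n, D (u n)) -> hcvg (fun n => A (u n)) y ->
        exists x, D x /\ A x = y
    & exists s : seq V, forall y, exists x, D x /\ in_span s (y - A x)].
End OneSpace.

Definition linmap (U V : lmodType C) (f : U -> V) : Prop :=
  forall (a : C) x y, f (a *: x + y) = a *: f x + f y.

Definition bounded (U V : lmodType C) (ipU : U -> U -> C) (ipV : V -> V -> C)
  (f : U -> V) : Prop :=
  exists c : C, forall x, hnorm ipV (f x) <= c * hnorm ipU x.

Definition ip_sum (U : lmodType C) (ip : U -> U -> C) (x y : U * U) : C :=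
  ip x.1 y.1 + ip x.2 y.2.

Definition dsmap (U V : Type) (f : U -> V) (x : U * U) : V * V := (f x.1, f x.2).

Definition epsop (U : Type) (x : U * U) : U * U := (x.2, x.1).

End Hilbert.

From mathcomp Require Import all_boot all_order all_algebra.
From mathcomp.real_closed Require Import complex.
From mathcomp Require Import reals.
From mathcomp Require Import ring lra.
From Stdlib Require Import IndefiniteDescription.
Import Order.TTheory GRing.Theory Num.Theory.
Local Open Scope ring_scope.

(* The idea: Green's formula and the boundary condition gamma b = Upsilon gamma a
   give Re <P x, epsilon x> >= 0 on D(P), so for the self-adjoint P and the
   symmetric unitary involution epsilon,
     |(P + epsilon) x|^2 = |P x|^2 + |x|^2 + 2 Re <P x, epsilon x>
                         >= |P x|^2 + |x|^2.
   This lower bound gives injectivity and (P being closed) a closed range;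
   self-adjointness makes any vector orthogonal to the range a solution of
   (P + epsilon) w = 0, so the range is everything by the projection theorem. *)

Section Hilbert.
Variable R : realType.
Local Notation C := (R[i]).
(* Components of R[i]; [Num.Theory.Re] would be the generic (complex-valued) one. *)
Local Notation RE := complex.Re.
Local Notation IM := complex.Im.
Local Notation "x %:C" := (x%:C)%C (at level 1, format "x %:C") : ring_scope.

Section ComplexComponents.

(* Component formulas for the field operations of R[i]; together with [lra]
   they reduce all scalar computations below to real arithmetic. *)
Lemma Re_mul (a b : C) : RE (a * b) = RE a * RE b - IM a * IM b.
Proof. by case: a => ??; case: b. Qed.
Lemma Im_mul (a b : C) : IM (a * b) = RE a * IM b + IM a * RE b.
Proof. by case: a => ??; case: b. Qed.
Lemma Re_add (a b : C) : RE (a + b) = RE a + RE b.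
Proof. by case: a => ??; case: b. Qed.
Lemma Re_opp (a : C) : RE (- a) = - RE a.
Proof. by case: a. Qed.
Lemma Im_opp (a : C) : IM (- a) = - IM a.
Proof. by case: a. Qed.
Lemma Re_conj (a : C) : RE (a^*) = RE a.
Proof. by case: a. Qed.
Lemma Im_conj (a : C) : IM (a^*) = - IM a.
Proof. by case: a. Qed.

Lemma complex_eq (a b : C) : RE a = RE b -> IM a = IM b -> a = b.
Proof. by case: a => ??; case: b => ?? /= -> ->. Qed.

Lemma ge0_real (a : C) : 0 <= a -> a = (RE a)%:C.
Proof. by move=> a0; apply: complex_eq => //=; apply: ger0_Im. Qed.

Lemma sqrtC_real (r : R) : 0 <= r -> sqrtC r%:C = (Num.sqrt r)%:C.
Proof.
move=> r0; have -> : r%:C = ((Num.sqrt r)%:C) ^+ 2 by rewrite -rmorphXn /= sqr_sqrtr.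
by rewrite sqrCK // lecR sqrtr_ge0.
Qed.

Lemma sqrtC_lt (z e : C) : 0 <= z -> 0 < e -> (sqrtC z < e) = (RE z < RE e ^+ 2).
Proof.
move=> z0 e0; have z0' : 0 <= RE z by rewrite -lecR -ge0_real.
have e0' : 0 < RE e by rewrite -ltcR -ge0_real // ltW.
rewrite {1}(@ge0_real z z0) sqrtC_real // {1}(@ge0_real e (ltW e0)) ltcR.
by rewrite -{1}(ger0_norm (ltW e0')) -sqrtr_sqr ltr_sqrt // exprn_gt0.
Qed.

Lemma conj_real (t : R) : (t%:C)^* = t%:C :> C.
Proof. by apply: complex_eq; rewrite ?Re_conj ?Im_conj //= oppr0. Qed.

Lemma sqr_modulus_eq0 (c : C) : RE c ^+ 2 + IM c ^+ 2 = 0 -> c = 0.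
Proof.
move=> h; have s1 := sqr_ge0 (RE c); have s2 := sqr_ge0 (IM c).
have r1 : RE c = 0 by apply/eqP; rewrite -sqrf_eq0; apply/eqP; lra.
have r2 : IM c = 0 by apply/eqP; rewrite -sqrf_eq0; apply/eqP; lra.
exact: complex_eq.
Qed.

Lemma inv_succ_small (r : R) : 0 < r ->
  exists N, forall n, (N <= n)%N -> (n.+1%:R)^-1 < r.
Proof.
move=> r0; exists (Num.Def.archi_bound r^-1) => n hn.
rewrite invf_plt ?posrE ?ltr0Sn //.
apply: (lt_le_trans (archi_boundP _)); first by rewrite invr_ge0 ltW.
by rewrite ler_nat; apply: leq_trans hn _.
Qed.

End ComplexComponents.

Section InnerProduct.
Variables (V : lmodType C) (ip : V -> V -> C).
Hypothesis hV : is_hilbert ip.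

Lemma ipL (a : C) x y z : ip (a *: x + y) z = a * ip x z + ip y z.
Proof. by case: hV => h *; apply: h. Qed.
Lemma ipJ x y : ip y x = (ip x y)^*.
Proof. by case: hV => _ h *; apply: h. Qed.
Lemma ip_ge0 x : 0 <= ip x x.
Proof. by case: hV => _ _ h *; apply: h. Qed.
Lemma ip_eq0 x : ip x x = 0 -> x = 0.
Proof. by case: hV => _ _ _ h *; apply: h. Qed.

Lemma ip0l z : ip 0 z = 0.
Proof.
have := ipL 1 0 0 z; rewrite scaler0 add0r mul1r -{1}(addr0 (ip 0 z)).
by move/addrI.
Qed.
Lemma ipDl x y z : ip (x + y) z = ip x z + ip y z.
Proof. by have := ipL 1 x y z; rewrite scale1r mul1r. Qed.
Lemma ipZl a x z : ip (a *: x) z = a * ip x z.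
Proof. by have := ipL a x 0 z; rewrite addr0 ip0l addr0. Qed.
Lemma ipNl x z : ip (- x) z = - ip x z.
Proof. by rewrite -scaleN1r ipZl mulN1r. Qed.
Lemma ipDr x y z : ip z (x + y) = ip z x + ip z y.
Proof. by rewrite ipJ ipDl rmorphD /= -!ipJ. Qed.
Lemma ipZr a x z : ip z (a *: x) = a^* * ip z x.
Proof. by rewrite ipJ ipZl rmorphM /= -ipJ. Qed.
Lemma ipNr x z : ip z (- x) = - ip z x.
Proof. by rewrite -scaleN1r ipZr conjCN1 mulN1r. Qed.

Definition n2 x := RE (ip x x).
Definition re x y := RE (ip x y).

Lemma ipxx x : ip x x = (n2 x)%:C.
Proof. exact: ge0_real (ip_ge0 x). Qed.
Lemma n2_ge0 x : 0 <= n2 x.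
Proof. by rewrite -lecR -ipxx ip_ge0. Qed.
Lemma n2_eq0 x : n2 x = 0 -> x = 0.
Proof. by move=> h; apply: ip_eq0; rewrite ipxx h. Qed.
Lemma n20 : n2 0 = 0.
Proof. by rewrite /n2 ip0l. Qed.
Lemma reC x y : re x y = re y x.
Proof. by rewrite /re (ipJ x y) Re_conj. Qed.
Lemma n2D x y : n2 (x + y) = n2 x + n2 y + 2 * re x y.
Proof. rewrite /n2 ipDl !ipDr !Re_add -/(re x y) -/(re y x) reC /re; lra. Qed.
Lemma n2N x : n2 (- x) = n2 x.
Proof. by rewrite /n2 ipNl ipNr opprK. Qed.
Lemma n2B x y : n2 (x - y) = n2 x + n2 y - 2 * re x y.
Proof. by rewrite n2D n2N /re ipNr Re_opp; lra. Qed.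
Lemma n2_subC x y : n2 (x - y) = n2 (y - x).
Proof. by rewrite -n2N opprB. Qed.
Lemma n2Z (a : C) x : n2 (a *: x) = RE (a * a^*) * n2 x.
Proof.
by rewrite /n2 ipZl ipZr mulrA ipxx; case: (a * a^*) => ?? /=; rewrite mulr0 subr0.
Qed.
Lemma n2Zr (t : R) x : n2 (t%:C *: x) = t ^+ 2 * n2 x.
Proof. by rewrite n2Z conj_real Re_mul /= mulr0 subr0 expr2. Qed.

(* 2 t Re <x, y> <= t^2 |x|^2 + |y|^2, from 0 <= |t x - y|^2. *)
Lemma re_le_t (t : R) x y : 2 * t * re x y <= t ^+ 2 * n2 x + n2 y.
Proof.
have := n2_ge0 (t%:C *: x - y).
by rewrite n2B n2Zr /re ipZl Re_mul /= mul0r subr0; lra.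
Qed.
Lemma n2D_le x y : n2 (x + y) <= 2 * n2 x + 2 * n2 y.
Proof. have := re_le_t 1 x y; rewrite n2D; lra. Qed.
(* Weighted form: |x + y|^2 <= (1 + t) |x|^2 + (1 + 1/t) |y|^2, times t. *)
Lemma n2D_le_t (t : R) x y : 0 < t ->
  t * n2 (x + y) <= t * (1 + t) * n2 x + (t + 1) * n2 y.
Proof. move=> t0; have := re_le_t t x y; rewrite n2D; nra. Qed.
Lemma parallelogram x y : n2 (x - y) + n2 (x + y) = 2 * n2 x + 2 * n2 y.
Proof. rewrite n2B n2D; lra. Qed.

Definition cvg2 (u : nat -> V) x := forall r : R, 0 < r ->
  exists N, forall n, (N <= n)%N -> n2 (u n - x) < r.
Definition cauchy2 (u : nat -> V) := forall r : R, 0 < r ->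
  exists N, forall m n, (N <= m)%N -> (N <= n)%N -> n2 (u m - u n) < r.

Lemma hnormE x : hnorm ip x = (Num.sqrt (n2 x))%:C.
Proof. by rewrite /hnorm ipxx sqrtC_real // n2_ge0. Qed.

Lemma hnorm_lt (e : C) x : 0 < e -> (hnorm ip x < e) = (n2 x < RE e ^+ 2).
Proof. by move=> e0; rewrite /hnorm sqrtC_lt ?ip_ge0. Qed.

Lemma sqrt_pos (r : R) : 0 < r -> 0 < (Num.sqrt r)%:C :> C /\
  RE ((Num.sqrt r)%:C : C) ^+ 2 = r.
Proof. by move=> r0; rewrite ltcR sqrtr_gt0 /= sqr_sqrtr // ltW. Qed.
Lemma RE_sqr_pos (e : C) : 0 < e -> 0 < RE e ^+ 2.
Proof. by move=> e0; rewrite exprn_gt0 // -ltcR -ge0_real // ltW. Qed.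

Lemma hcvgP u x : hcvg ip u x <-> cvg2 u x.
Proof.
split=> h r r0.
- have [e0 <-] := @sqrt_pos r r0; have [N hN] := h _ e0.
  by exists N => n /hN; rewrite hnorm_lt.
- have [N hN] := h _ (@RE_sqr_pos r r0).
  by exists N => n /hN; rewrite hnorm_lt.
Qed.

Lemma hcauchyP u : hcauchy ip u <-> cauchy2 u.
Proof.
split=> h r r0.
- have [e0 <-] := @sqrt_pos r r0; have [N hN] := h _ e0.
  by exists N => m n hm hn; rewrite -hnorm_lt // hN.
- have [N hN] := h _ (@RE_sqr_pos r r0).
  by exists N => m n hm hn; rewrite hnorm_lt // hN.
Qed.

Lemma complete u : cauchy2 u -> exists x, cvg2 u x.
Proof.
move/hcauchyP => h; case: hV => _ _ _ _ hc.
by have [x /hcvgP hx] := hc u h; exists x.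
Qed.

Lemma cvg_cauchy u x : cvg2 u x -> cauchy2 u.
Proof.
move=> h r r0; have [N hN] := h (r / 4) ltac:(lra).
exists N => m n hm hn; have := n2D_le (u m - x) (x - u n).
by rewrite addrA subrK n2_subC; have := hN m hm; have := hN n hn; lra.
Qed.

Lemma cvg_uniq u x y : cvg2 u x -> cvg2 u y -> x = y.
Proof.
move=> hx hy; apply/eqP; rewrite -subr_eq0; apply/eqP; apply: n2_eq0.
apply/eqP; rewrite eq_le n2_ge0 andbT; apply/ler_addgt0Pr => r r0.
have [N1 h1] := hx (r / 4) ltac:(lra).
have [N2 h2] := hy (r / 4) ltac:(lra).
pose n := maxn N1 N2; have := n2D_le (x - u n) (u n - y).
rewrite addrA subrK n2_subC.
by have := h1 n (leq_maxl _ _); have := h2 n (leq_maxr _ _); lra.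
Qed.

Lemma cvgD u v x y : cvg2 u x -> cvg2 v y -> cvg2 (fun n => u n + v n) (x + y).
Proof.
move=> hx hy r r0.
have [N1 h1] := hx (r / 4) ltac:(lra).
have [N2 h2] := hy (r / 4) ltac:(lra).
exists (maxn N1 N2) => n hn; have := n2D_le (u n - x) (v n - y).
rewrite addrACA -opprD.
have := h1 n (leq_trans (leq_maxl _ _) hn).
by have := h2 n (leq_trans (leq_maxr _ _) hn); lra.
Qed.

Lemma cvg2_n2_le u x (b : R) : 0 <= b -> cvg2 u x ->
  (forall r, 0 < r -> exists N, forall n, (N <= n)%N -> n2 (u n) < b + r) ->
  n2 x <= b.
Proof.
move=> b0 hx hb; apply/ler_addgt0Pr => de de0.
pose t := de / (3 * b + de).
have bde : 0 < 3 * b + de by lra.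
have t0 : 0 < t by rewrite divr_gt0.
have ht : t * (3 * b + de) = de by rewrite divfK // lt0r_neq0.
have [N1 h1] := hb (de / 3) ltac:(lra).
have s0 : 0 < t * de / 3 / (t + 1).
  by apply: divr_gt0; [apply: divr_gt0; [exact: mulr_gt0 | lra] | lra].
have [N2 h2] := hx _ s0.
pose n := maxn N1 N2.
have hu := h1 n (leq_maxl _ _); have hd := h2 n (leq_maxr _ _).
have hd' : (t + 1) * n2 (u n - x) <= t * de / 3.
  rewrite -(@ler_pM2r _ (t + 1)^-1) ?invr_gt0; last lra.
  by rewrite mulrAC mulfV ?mul1r ?ltW // lt0r_neq0 //; lra.
have := @n2D_le_t t (u n) (x - u n) t0; rewrite addrC subrK n2_subC.
have hu' : t * (1 + t) * n2 (u n) <= t * (1 + t) * (b + de / 3).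
  by apply: ler_wpM2l; [apply: mulr_ge0; lra | lra].
move=> hfin; have : t * n2 x <= t * (b + de) by nra.
by rewrite ler_pM2l.
Qed.

Section Projection.
Variable M : V -> Prop.
Hypothesis M_sub : subspace M.
Hypothesis M_closed : forall u x, (forall n, M (u n)) -> cvg2 u x -> M x.

Lemma subspace0 : M 0. Proof. by case: M_sub. Qed.
Lemma subspaceL (a : C) {x y} : M x -> M y -> M (a *: x + y).
Proof. by case: M_sub => _; apply. Qed.

(* A nearest point m of M to y makes y - m orthogonal to M: expanding
   |y - m - t <y - m, v> v|^2 >= |y - m|^2 forces 2 t |c|^2 <= t^2 |c|^2 |v|^2
   for all t > 0, with c = <y - m, v>, hence c = 0. *)
Lemma nearest_orthogonal y m : M m ->
  (forall m', M m' -> n2 (y - m) <= n2 (y - m')) ->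
  forall v, M v -> ip (y - m) v = 0.
Proof.
move=> Mm near v Mv; set c := ip (y - m) v.
pose q := RE c ^+ 2 + IM c ^+ 2.
have q0 : 0 <= q by rewrite /q addr_ge0 ?sqr_ge0.
have variation (t : R) : 2 * t * q <= t ^+ 2 * q * n2 v.
  have := near _ (subspaceL (t%:C * c) Mv Mm).
  have -> : y - ((t%:C * c) *: v + m) = (y - m) - (t%:C * c) *: v.
    by rewrite opprD addrCA addrC.
  have e1 : RE ((t%:C * c) * (t%:C * c)^*) = t ^+ 2 * q.
    by rewrite rmorphM /= conj_real !(Re_mul, Im_mul, Re_conj, Im_conj) /= /q; ring.
  have e2 : re (y - m) ((t%:C * c) *: v) = t * q.
    by rewrite /re ipZr -/c rmorphM /= conj_real !(Re_mul, Im_mul, Re_conj, Im_conj) /= /q; ring.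
  by rewrite [n2 (y - m - _)]n2B n2Z e1 e2; lra.
pose t := (n2 v + 1)^-1.
have nv0 := n2_ge0 v.
have t0 : 0 < t by rewrite invr_gt0 ltr_wpDl.
have ht : t * (n2 v + 1) = 1 by rewrite mulVf // lt0r_neq0 // ltr_wpDl.
have h := variation t.
have tq : t * q * (1 + t) <= 0 by nra.
have : t * q <= 0 by move: tq; rewrite pmulr_lle0 // ltr_wpDr // ltW.
rewrite pmulr_rle0 // => qle0.
by apply: sqr_modulus_eq0; apply/eqP; rewrite eq_le qle0 q0.
Qed.

(* A sequence of M whose distances to y approach the infimum d of distances
   is Cauchy, by the parallelogram law applied around the midpoint. *)
Lemma minimizing_cauchy y (d : R) (ms : nat -> V) :
  (forall m, M m -> d <= n2 (y - m)) -> (forall n, M (ms n)) ->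
  (forall n, n2 (y - ms n) < d + (n.+1%:R)^-1) -> cauchy2 ms.
Proof.
move=> dle Mms hms.
have bound n k : n2 (ms k - ms n) <= 2 * (n.+1%:R)^-1 + 2 * (k.+1%:R)^-1.
  have Mmid : M ((2^-1 : R)%:C *: (ms n + ms k)).
    rewrite -[_ *: _]addr0; apply: subspaceL subspace0.
    by rewrite -[ms n]scale1r; apply: subspaceL.
  have e1 : (y - ms n) + (y - ms k) =
      (2 : R)%:C *: (y - (2^-1 : R)%:C *: (ms n + ms k)).
    rewrite scalerBr scalerA -rmorphM /= mulfV ?pnatr_eq0 // scale1r.
    by rewrite rmorph_nat scaler_nat mulr2n opprD addrACA.
  have e2 : (y - ms n) - (y - ms k) = ms k - ms n.
    by rewrite opprB addrC addrA subrK.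
  have := parallelogram (y - ms n) (y - ms k); rewrite e1 e2 n2Zr expr2.
  have := dle _ Mmid; have := hms n; have := hms k.
  set en := (n.+1%:R)^-1; set ek := (k.+1%:R)^-1; lra.
move=> r r0; have r4 : 0 < r / 4 by lra.
have [N hN] := @inv_succ_small _ r4.
exists N => m n hm hn.
have := bound n m; have := hN m hm; have := hN n hn.
set en := (n.+1%:R)^-1; set em := (m.+1%:R)^-1; lra.
Qed.

Lemma nearest_point y :
  exists m, M m /\ forall m', M m' -> n2 (y - m) <= n2 (y - m').
Proof.
pose S : classical_sets.set R := fun r => exists m, M m /\ r = n2 (y - m).
have Sne : classical_sets.nonempty S by exists (n2 (y - 0)), 0; split=> //; apply: subspace0.
have Slb : classical_sets.has_lbound S by exists 0 => r [m [_ ->]]; apply: n2_ge0.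
pose d := inf S.
have dle m : M m -> d <= n2 (y - m) by move=> hm; apply: (ge_inf Slb); exists m.
have d0 : 0 <= d by apply: lb_le_inf Sne _ => r [m [_ ->]]; apply: n2_ge0.
have approx n : exists m, M m /\ n2 (y - m) < d + (n.+1%:R)^-1.
  have : d < d + (n.+1%:R)^-1 by rewrite ltrDl invr_gt0 ltr0Sn.
  by move/(inf_lt Sne) => [r [m [hm ->]] hr]; exists m.
have [ms hms] := functional_choice _ approx.
have Mms n : M (ms n) by case: (hms n).
have [m hm] := @complete ms (@minimizing_cauchy y d ms dle Mms (fun n => (hms n).2)).
exists m; split; first exact: M_closed hm.
move=> m' Mm'; apply: le_trans (dle _ Mm').
apply: (@cvg2_n2_le (fun n => y - ms n)) => //.
- move=> r r0; have [N hN] := hm r r0; exists N => n /hN.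
  have -> : y - ms n - (y - m) = - (ms n - m).
    by rewrite opprB addrC addrA subrK opprB.
  by rewrite n2N.
- move=> r r0; have [N hN] := @inv_succ_small _ r0; exists N => n /hN hn.
  by apply: lt_trans (hms n).2 _; rewrite ltrD2l.
Qed.

Lemma projection y : exists m, M m /\ forall v, M v -> ip (y - m) v = 0.
Proof.
have [m [Mm near]] := nearest_point y.
by exists m; split=> //; apply: nearest_orthogonal.
Qed.

End Projection.
End InnerProduct.

Arguments n2 {V} ip x.
Arguments re {V} ip x y.
Arguments cvg2 {V} ip u x.
Arguments cauchy2 {V} ip u.
Arguments ipL {V ip} hV a x y z.
Arguments ipJ {V ip} hV x y.
Arguments ip_ge0 {V ip} hV x.
Arguments ip_eq0 {V ip} hV x.
Arguments hcvgP {V ip} hV u x.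
Arguments ipZl {V ip} hV a x z.
Arguments ip0l {V ip} hV z.
Arguments n2D {V ip} hV x y.
Arguments n2D_le {V ip} hV x y.
Arguments n2_ge0 {V ip} hV x.
Arguments n2_eq0 {V ip} hV x.
Arguments n20 {V ip} hV.
Arguments hnormE {V ip} hV x.
Arguments ipDl {V ip} hV x y z.
Arguments ipNr {V ip} hV x z.
Arguments complete {V ip} hV u.
Arguments cvg_cauchy {V ip} hV u x.
Arguments cvg_uniq {V ip} hV u x y.
Arguments cvgD {V ip} hV u v x y.
Arguments projection {V ip} hV {M}.

Section DirectSum.
Variables (U : lmodType C) (ipU : U -> U -> C).
Hypothesis hU : is_hilbert ipU.

Lemma ip_sum_ge0 (x : U * U) : 0 <= ip_sum ipU x x.
Proof. by rewrite /ip_sum addr_ge0 // (ip_ge0 hU). Qed.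


Lemma hnorm_sum_fst (a b : U) : hnorm ipU a <= hnorm (ip_sum ipU) (a, b).
Proof.
rewrite /hnorm ler_sqrtC ?qualifE /= ?(ip_ge0 hU) ?ip_sum_ge0 //.
by rewrite /ip_sum lerDl (ip_ge0 hU).
Qed.
Lemma hnorm_sum_snd (a b : U) : hnorm ipU b <= hnorm (ip_sum ipU) (a, b).
Proof.
rewrite /hnorm ler_sqrtC ?qualifE /= ?(ip_ge0 hU) ?ip_sum_ge0 //.
by rewrite /ip_sum lerDr (ip_ge0 hU).
Qed.

Lemma hilbert_sum : is_hilbert (ip_sum ipU).
Proof.
split.
- by move=> a x y z; rewrite /ip_sum /= !(ipL hU); ring.
- by move=> x y; rewrite /ip_sum rmorphD /= -!(ipJ hU).
- exact: ip_sum_ge0.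
- move=> [x1 x2]; rewrite /ip_sum /= => /eqP; rewrite paddr_eq0 ?(ip_ge0 hU) //.
  by case/andP => /eqP /(ip_eq0 hU) -> /eqP /(ip_eq0 hU) ->.
move=> u hu.
have c1 : hcauchy ipU (fun n => (u n).1).
  move=> e e0; have [N hN] := hu e e0; exists N => m n hm hn.
  exact: le_lt_trans (hnorm_sum_fst _ ((u m).2 - (u n).2)) (hN m n hm hn).
have c2 : hcauchy ipU (fun n => (u n).2).
  move=> e e0; have [N hN] := hu e e0; exists N => m n hm hn.
  exact: le_lt_trans (hnorm_sum_snd ((u m).1 - (u n).1) _) (hN m n hm hn).
case: hU (hU) => _ _ _ _ hc _.
have [x1 /(hcvgP hU) h1] := hc _ c1; have [x2 /(hcvgP hU) h2] := hc _ c2.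
exists (x1, x2) => e e0.
have r0 : 0 < RE e ^+ 2 / 2 by rewrite divr_gt0 // RE_sqr_pos.
have [N1 hN1] := h1 _ r0; have [N2 hN2] := h2 _ r0.
exists (maxn N1 N2) => n hn.
have a1 := hN1 n (leq_trans (leq_maxl _ _) hn).
have a2 := hN2 n (leq_trans (leq_maxr _ _) hn).
rewrite /hnorm sqrtC_lt ?ip_sum_ge0 // /ip_sum /= Re_add.
by move: a1 a2; rewrite /n2; lra.
Qed.

End DirectSum.

Lemma sqrt_sum_equiv (a b s : R) : 0 <= a -> 0 <= b ->
  a + b <= s -> s <= 2 * a + 2 * b ->
  Num.sqrt a + Num.sqrt b <= 2 * Num.sqrt s /\
  Num.sqrt s <= 2 * (Num.sqrt a + Num.sqrt b).
Proof.
move=> a0 b0 lo hi; have s0 : 0 <= s by lra.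
have sq_le (x y : R) : 0 <= x -> 0 <= y -> x ^+ 2 <= y ^+ 2 -> x <= y.
  by move=> x0 y0 h; rewrite leNgt; apply/negP => h'; nra.
have A2 := sqr_sqrtr a0; have B2 := sqr_sqrtr b0; have S2 := sqr_sqrtr s0.
have A0 := sqrtr_ge0 a; have B0 := sqrtr_ge0 b; have S0 := sqrtr_ge0 s.
move: (Num.sqrt a) (Num.sqrt b) (Num.sqrt s) A2 B2 S2 A0 B0 S0 => A B S A2 B2 S2 *.
rewrite -A2 -B2 -S2 in lo hi.
by split; apply: sq_le; nra.
Qed.

Lemma linmap_sub {U V : lmodType C} {f : U -> V} :
  linmap f -> forall x y, f (x - y) = f x - f y.
Proof.
move=> hf x y; have := hf (-1) y x.
by rewrite !scaleN1r [- y + x]addrC [- f y + f x]addrC.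
Qed.

Lemma linmap0 {U V : lmodType C} {f : U -> V} : linmap f -> f 0 = 0.
Proof. by move=> hf; have := linmap_sub hf 0 0; rewrite !subrr. Qed.

Lemma lin_on0 {V : lmodType C} {D : V -> Prop} {A : V -> V} :
  lin_on D A -> D 0 /\ A 0 = 0.
Proof.
case=> [[D0 _] hA]; split=> //; have := hA 1 0 0 D0 D0.
by rewrite scaler0 add0r scale1r -{1}(addr0 (A 0)) => /addrI.
Qed.

Lemma lin_on_sub {V : lmodType C} {D : V -> Prop} {A : V -> V} {x y} :
  lin_on D A -> D x -> D y -> D (x - y) /\ A (x - y) = A x - A y.
Proof.
case=> [[_ DL] hA] Dx Dy; rewrite -[y]scale1r -scaleNr addrC.
by split; [apply: DL | rewrite hA // scaleNr !scale1r addrC].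
Qed.

Section AccretivePerturbation.
Variables (W : lmodType C) (ip : W -> W -> C).
Hypothesis hW : is_hilbert ip.
Variables (D : W -> Prop) (A E : W -> W).
Hypothesis A_lin : lin_on D A.
Hypothesis A_closed : closed_op ip D A.
Hypothesis A_sa : is_adjoint ip D A D A.
Hypothesis E_lin : linmap E.
Hypothesis E_iso : forall x, n2 ip (E x) = n2 ip x.
Hypothesis E_sym : forall x y, ip (E x) y = ip x (E y).
Hypothesis A_acc : forall x, D x -> 0 <= re ip (A x) (E x).

Lemma graph_lower {x} : D x -> n2 ip (A x) + n2 ip x <= n2 ip (A x + E x).
Proof. by move=> Dx; rewrite (n2D hW) E_iso; have := A_acc x Dx; lra. Qed.

Lemma graph_upper x : n2 ip (A x + E x) <= 2 * n2 ip (A x) + 2 * n2 ip x.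
Proof. by have := n2D_le hW (A x) (E x); rewrite E_iso. Qed.

Lemma pert_sub {x y} : D x -> D y ->
  A (x - y) + E (x - y) = (A x + E x) - (A y + E y).
Proof.
move=> Dx Dy; rewrite (lin_on_sub A_lin Dx Dy).2 (linmap_sub E_lin).
by rewrite opprD addrACA.
Qed.

Lemma pert_injective {x} : D x -> A x + E x = 0 -> x = 0.
Proof.
move=> Dx h0; apply: (n2_eq0 hW); apply/eqP; rewrite eq_le (n2_ge0 hW) andbT.
by have := graph_lower Dx; rewrite h0 (n20 hW); have := n2_ge0 hW (A x); lra.
Qed.

Definition pert_range z := exists x, D x /\ A x + E x = z.

Lemma pert_range_subspace : subspace pert_range.
Proof.
have [D0 A0] := lin_on0 A_lin; split.
  by exists 0; rewrite A0 (linmap0 E_lin) addr0.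
move=> a _ _ [x [Dx <-]] [y [Dy <-]]; exists (a *: x + y).
case: A_lin => [[_ DL] AL]; split; first exact: DL.
by rewrite AL // E_lin scalerDr addrACA.
Qed.

(* The lower bound turns a Cauchy sequence in the range into Cauchy
   sequences of preimages and of their images; closedness of A concludes. *)
Lemma pert_range_closed u z :
  (forall n, pert_range (u n)) -> cvg2 ip u z -> pert_range z.
Proof.
move=> hu hz; have [xs hxs] := functional_choice _ hu.
have Dxs n : D (xs n) by case: (hxs n).
have bound m n : n2 ip (A (xs m) - A (xs n)) + n2 ip (xs m - xs n)
                 <= n2 ip (u m - u n).
  have [Dmn <-] := lin_on_sub A_lin (Dxs m) (Dxs n).
  by rewrite -(hxs m).2 -(hxs n).2 -pert_sub //; apply: graph_lower.
have cu := cvg_cauchy hW _ _ hz.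
have cx : cauchy2 ip xs.
  move=> r r0; have [N hN] := cu r r0; exists N => m n hm hn.
  have := hN m n hm hn; have := bound m n.
  by have := n2_ge0 hW (A (xs m) - A (xs n)); lra.
have cA : cauchy2 ip (fun n => A (xs n)).
  move=> r r0; have [N hN] := cu r r0; exists N => m n hm hn.
  have := hN m n hm hn; have := bound m n.
  by have := n2_ge0 hW (xs m - xs n); lra.
have [x hx] := complete hW _ cx; have [p hp] := complete hW _ cA.
have [Dx Ax] := A_closed _ _ _ Dxs ((hcvgP hW _ _).2 hx) ((hcvgP hW _ _).2 hp).
have hE : cvg2 ip (fun n => E (xs n)) (E x).
  move=> r r0; have [N hN] := hx r r0; exists N => n hn.
  by rewrite -(linmap_sub E_lin) E_iso; apply: hN.
have hsum : cvg2 ip u (p + E x).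
  move=> r r0; have [N hN] := cvgD hW _ _ _ _ hp hE r r0.
  by exists N => n hn; rewrite -(hxs n).2; apply: hN.
by exists x; split=> //; rewrite Ax (cvg_uniq hW _ _ _ hz hsum).
Qed.

(* By self-adjointness, a vector w orthogonal to the range lies in D with
   A w = - E w, hence is killed by A + E. *)
Lemma pert_range_orth w : (forall z, pert_range z -> ip z w = 0) -> w = 0.
Proof.
move=> orth; have [Dw Aw] : D w /\ A w = - E w.
  apply/(A_sa w (- E w)) => x Dx.
  have h0 : ip (A x + E x) w = 0 by apply: orth; exists x.
  rewrite (ipNr hW) -E_sym; apply/eqP; rewrite -subr_eq0 opprK.
  by rewrite -(ipDl hW) h0.
by apply: pert_injective; rewrite // Aw addNr.
Qed.

Lemma pert_surjective y : pert_range y.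
Proof.
have [m [hm orth]] := projection hW pert_range_subspace pert_range_closed y.
suff /eqP : y - m = 0 by rewrite subr_eq0 => /eqP ->.
apply: pert_range_orth => z hz.
by rewrite (ipJ hW) orth // conjC0.
Qed.

Lemma pert_isomorphism :
  (forall y, exists x, [/\ D x, A x + E x = y &
      forall x', D x' -> A x' + E x' = y -> x' = x])
  /\ exists c : C, 0 < c /\ forall x, D x ->
       hnorm ip x + hnorm ip (A x) <= c * hnorm ip (A x + E x)
       /\ hnorm ip (A x + E x) <= c * (hnorm ip x + hnorm ip (A x)).
Proof.
split.
  move=> y; have [x [Dx hxy]] := pert_surjective y.
  exists x; split=> // x' Dx' hx'y; apply/eqP; rewrite -subr_eq0; apply/eqP.
  apply: pert_injective; first exact: (lin_on_sub A_lin Dx' Dx).1.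
  by rewrite pert_sub // hx'y hxy subrr.
exists 2; split=> // x Dx; rewrite !(hnormE hW).
have -> : (2 : C) = (2 : R)%:C by rewrite rmorph_nat.
rewrite -!rmorphD -!rmorphM /= !lecR.
have lo := graph_lower Dx; have hi := graph_upper x.
by apply: sqrt_sum_equiv; rewrite ?(n2_ge0 hW) //; lra.
Qed.

End AccretivePerturbation.

(* If Sigma is self-adjoint and -i Sigma Upsilon is positive definite, the
   boundary form Re <i Sigma g, Upsilon g> is nonnegative: writing
   z = <Upsilon g, Sigma g> = <Sigma Upsilon g, g>, positivity of -i z forces
   Re z = 0 and Im z > 0, and Re <i Sigma g, Upsilon g> = Re (i conj z) = Im z. *)
Lemma boundary_form_ge0 (S : lmodType C) (ipS : S -> S -> C) (Sig Ups : S -> S) :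
  is_hilbert ipS -> linmap Sig -> (forall x y, ipS (Sig x) y = ipS x (Sig y)) ->
  (forall x, x <> 0 -> 0 < ipS (- 'i *: Sig (Ups x)) x) ->
  forall g, 0 <= RE (ipS ('i *: Sig g) (Ups g)).
Proof.
move=> hS Sig_lin Sig_sa pos g; have [-> | /eqP gn0] := eqVneq g 0.
  by rewrite (linmap0 Sig_lin) scaler0 (ip0l hS).
have := pos g gn0; rewrite !(ipZl hS) Sig_sa (ipJ hS (Ups g) (Sig g)).
set z := ipS (Ups g) (Sig g); rewrite ltcE => /andP[/eqP hIm hRe].
move: hIm hRe; rewrite !(Re_mul, Im_mul, Re_conj, Im_conj, Re_opp, Im_opp) /=; lra.
Qed.

End Hilbert.

Arguments n2 {R V} ip x.
Arguments re {R V} ip x y.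
Arguments ipNl {R V ip} hV x z.
Arguments ipJ {R V ip} hV x y.
Arguments hilbert_sum {R U ipU} hU.
Arguments boundary_form_ge0 {R S ipS Sig Ups}.
Arguments pert_isomorphism {R W ip} hW {D A E}.

Theorem theorem8p2
  (R : realType)
  (H0 H1 Kd K : lmodType R[i])
  (ip0 : H0 -> H0 -> R[i]) (ip1 : H1 -> H1 -> R[i])
  (ipd : Kd -> Kd -> R[i]) (ipk : K -> K -> R[i])
  (* H0, Kd separable Hilbert spaces; H1, K Hilbert spaces *)
  (hH0 : is_hilbert ip0) (sH0 : separable ip0)
  (hKd : is_hilbert ipd) (sKd : separable ipd)
  (hH1 : is_hilbert ip1) (hK : is_hilbert ipk)
  (* H1 ⊂ H0 dense subspace, bounded inclusion *)
  (i1 : H1 -> H0) (i1_lin : linmap i1) (i1_inj : injective i1)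
  (i1_bd : bounded ip1 ip0 i1) (i1_dense : dense ip0 (fun x => exists h, i1 h = x))
  (* K ⊂ Kd dense subspace *)
  (iK : K -> Kd) (iK_lin : linmap iK) (iK_inj : injective iK)
  (iK_dense : dense ipd (fun x => exists k, iK k = x))
  (* T closed densely defined symmetric, with adjoint (DTs, Ts) *)
  (DT : H0 -> Prop) (T : H0 -> H0)
  (T_lin : lin_on DT T) (T_dense : dense ip0 DT) (T_closed : closed_op ip0 DT T)
  (T_sym : symmetric_op ip0 DT T)
  (DTs : H0 -> Prop) (Ts : H0 -> H0) (T_adj : is_adjoint ip0 DT T DTs Ts)
  (H1_sub : forall h : H1, DTs (i1 h))
  (* trace map gamma : H1 -> K (+) K, bounded surjective, D(T) = Ker gamma *)
  (gam : H1 -> K * K) (gam_lin : linmap gam)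
  (gam_bd : bounded ip1 (ip_sum ipk) gam) (gam_surj : forall k, exists h, gam h = k)
  (DT_ker : forall x, DT x <-> exists h, i1 h = x /\ gam h = 0)
  (* Sigma: bounded invertible self-adjoint on Kd (+) Kd, leaving K (+) K invariant *)
  (Sig : Kd * Kd -> Kd * Kd) (Sig_lin : linmap Sig)
  (Sig_bd : bounded (ip_sum ipd) (ip_sum ipd) Sig) (Sig_bij : bijective Sig)
  (Sig_sa : forall x y, ip_sum ipd (Sig x) y = ip_sum ipd x (Sig y))
  (Sig_inv : forall k : K * K, exists k', Sig (dsmap iK k) = dsmap iK k')
  (* Green's formula *)
  (green : forall u v : H1,
     ip0 (Ts (i1 u)) (i1 v) - ip0 (i1 u) (Ts (i1 v))
     = ip_sum ipd ('i *: Sig (dsmap iK (gam u))) (dsmap iK (gam v)))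
  (* Upsilon: unitary on Kd (+) Kd, leaving K (+) K invariant, commuting with Sigma *)
  (Ups : Kd * Kd -> Kd * Kd) (Ups_lin : linmap Ups) (Ups_bij : bijective Ups)
  (Ups_iso : forall x y, ip_sum ipd (Ups x) (Ups y) = ip_sum ipd x y)
  (Ups_inv : forall k : K * K, exists k', Ups (dsmap iK k) = dsmap iK k')
  (Ups_comm : forall x, Ups (Sig x) = Sig (Ups x))
  (* P := S^* restricted to { (a,b) in H1 (+) H1 | gamma b = Upsilon gamma a } *)
  (DP : H0 * H0 -> Prop)
  (DP_def : forall x, DP x <-> exists a b : H1, x = (i1 a, i1 b) /\
                         dsmap iK (gam b) = Ups (dsmap iK (gam a)))
  (P : H0 * H0 -> H0 * H0)
  (P_def : forall x, P x = (Ts x.1, - Ts x.2))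
  (P_sa : selfadjoint_op (ip_sum ip0) DP P)
  (P_fred : fredholm_op (ip_sum ip0) DP P)
  (* -i Sigma^* Upsilon positive definite (Sigma^* = Sigma) *)
  (pos : forall x : Kd * Kd, x <> 0 ->
     0 < ip_sum ipd (- 'i *: Sig (Ups x)) x) :
  (* P + epsilon : D(P) -> H0 (+) H0 is an isomorphism (D(P) with graph norm) *)
  (forall y : H0 * H0, exists x, [/\ DP x, P x + epsop x = y &
      forall x', DP x' -> P x' + epsop x' = y -> x' = x])
  /\ exists c : R[i], 0 < c /\ forall x, DP x ->
       hnorm (ip_sum ip0) x + hnorm (ip_sum ip0) (P x)
         <= c * hnorm (ip_sum ip0) (P x + epsop x)
       /\ hnorm (ip_sum ip0) (P x + epsop x)
         <= c * (hnorm (ip_sum ip0) x + hnorm (ip_sum ip0) (P x)).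
Proof.
have hW := hilbert_sum hH0.
case: P_sa => _ [P_lin P_adj]; case: P_fred => _ P_closed _ _ _.
have eps_lin : linmap (@epsop H0) by [].
have eps_iso x : n2 (ip_sum ip0) (epsop x) = n2 (ip_sum ip0) x.
  by rewrite /n2 /ip_sum addrC.
have eps_sym x y : ip_sum ip0 (epsop x) y = ip_sum ip0 x (epsop y).
  by rewrite /ip_sum addrC.
(* Green's formula turns Re <P x, epsilon x> into the boundary form at the
   trace of the first component, since gamma b = Upsilon gamma a on D(P). *)
have P_acc x : DP x -> 0 <= re (ip_sum ip0) (P x) (epsop x).
  case/DP_def => a [b [-> hab]].
  rewrite P_def /re /ip_sum /= Re_add (ipNl hH0) Re_opp (ipJ hH0 (i1 a)) Re_conj.
  have := boundary_form_ge0 (hilbert_sum hKd) Sig_lin Sig_sa pos (dsmap iK (gam a)).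
  by rewrite -hab -green Re_add Re_opp; lra.
exact: (pert_isomorphism hW P_lin P_closed P_adj eps_lin eps_iso eps_sym P_acc).
Qed.
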